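(* Let $X_1,X_2,\dots$ be iid with continuous distribution function $F\in\mathcal{D}(G)$ with norming constants $a_n>0$, $b_n\in\mathbb{R}$. Let $j=j(n)<k=k(n)$ be integers with $j/n\to\lambda_1>0$ and $k/n\to\lambda_2>\lambda_1$, and put $\beta_i=\lambda_i/(\lambda_2-\lambda_1)$, $i=1,2$. Then for all $y_1,y_2\in\mathbb{R}$, \[ \lim_{n\to\infty}\Pr\left(\frac{X_j-b_n}{a_n}\le y_1,\ \frac{X_k-b_n}{a_n}\le y_2\ \Big|\ X_j\text{ and }X_k\text{ are records}\right)=G_{\lambda_1,\lambda_2}(y_1,y_2), \] where \[ G_{\lambda_1,\lambda_2}(y_1,y_2)=\begin{cases} G(y_1)^{\lambda_1}\left(\beta_2G(y_2)^{\lambda_2-\lambda_1}-\beta_1G(y_1)^{\lambda_2-\lambda_1}\right), & \text{if } y_1<y_2,\\ G(y_2)^{\lambda_2}, & \text{if } y_1\ge y_2. \end{cases} \]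
   Context: $X_m$ is a record if $X_m>\max(X_1,\dots,X_{m-1})$; $X_1$ is always a record. $F\in\mathcal{D}(G)$ means $F^n(a_nx+b_n)\to G(x)$ as $n\to\infty$ for all $x$, where $G$ is a non-degenerate (hence continuous, extreme value) distribution function. *)

From Stdlib Require Import Reals Lra.
Open Scope R_scope.

Record ProbSpace (Omega : Type) := {
  meas : (Omega -> Prop) -> Prop;
  prob : (Omega -> Prop) -> R;
  meas_full : meas (fun _ => True);
  meas_compl : forall A, meas A -> meas (fun w => ~ A w);
  meas_cunion : forall A : nat -> Omega -> Prop,
      (forall n, meas (A n)) -> meas (fun w => exists n, A n w);
  prob_nonneg : forall A, meas A -> 0 <= prob A;
  prob_full : prob (fun _ => True) = 1;
  prob_sigma_additive : forall A : nat -> Omega -> Prop,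
      (forall n, meas (A n)) ->
      (forall n m w, n <> m -> A n w -> A m w -> False) ->
      infinite_sum (fun n => prob (A n)) (prob (fun w => exists n, A n w))
}.
Arguments meas {Omega} _ _.
Arguments prob {Omega} _ _.

Fixpoint prod1n (f : nat -> R) (n : nat) : R :=
  match n with O => 1 | S m => prod1n f m * f (S m) end.

Definition iid_with_cdf {Omega} (S : ProbSpace Omega) (X : nat -> Omega -> R)
    (F : R -> R) : Prop :=
  (forall i x, meas S (fun w => X i w <= x)) /\
  (forall (n : nat) (x : nat -> R),
      prob S (fun w => forall i, (1 <= i <= n)%nat -> X i w <= x i)
      = prod1n (fun i => F (x i)) n).

(* X_m is a record (indices start at 1; X_1 is always a record). *)
Definition is_record {Omega} (X : nat -> Omega -> R) (m : nat) (w : Omega) : Prop :=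
  forall i, (1 <= i < m)%nat -> X i w < X m w.

Definition cond_prob {Omega} (S : ProbSpace Omega) (A B : Omega -> Prop) : R :=
  prob S (fun w => A w /\ B w) / prob S B.

Definition distribution_function (G : R -> R) : Prop :=
  (forall x y, x <= y -> G x <= G y) /\
  (forall x, forall eps, eps > 0 -> exists d, d > 0 /\
       forall y, x <= y < x + d -> Rabs (G y - G x) < eps) /\
  (forall eps, eps > 0 -> exists M, forall x, x <= M -> Rabs (G x) < eps) /\
  (forall eps, eps > 0 -> exists M, forall x, x >= M -> Rabs (G x - 1) < eps).

Definition non_degenerate (G : R -> R) : Prop := exists x, 0 < G x < 1.

Definition in_domain_of_attraction (F G : R -> R) (a b : nat -> R) : Prop :=
  (forall n, 0 < a n) /\
  (forall x, Un_cv (fun n => (F (a n * x + b n)) ^ n) (G x)).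

(* real power x^p for x >= 0, with the convention 0^p = 0 (p > 0) *)
Definition rpow (x p : R) : R := if Rle_dec x 0 then 0 else Rpower x p.

Definition G_lim (G : R -> R) (l1 l2 y1 y2 : R) : R :=
  let b1 := l1 / (l2 - l1) in
  let b2 := l2 / (l2 - l1) in
  if Rlt_dec y1 y2 then
    rpow (G y1) l1 * (b2 * rpow (G y2) (l2 - l1) - b1 * rpow (G y1) (l2 - l1))
  else rpow (G y2) l2.

(* Two facts about an iid vector with continuous distribution function F drive the proof:
   swapping two coordinates does not change the law (exchangeability), and ties have
   probability zero. Classifying outcomes by the position of the maximum of X_1..X_j and of
   X_1..X_k then gives, for u <= v,
     j (k - j) P(X_j <= u, X_k <= v, X_j and X_k records)
       = F(u)^j F(v)^(k-j) - (j/k) F(u)^k,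
   and the thresholds u = v = +oo give P(X_j and X_k records) = 1/(jk). For v <= u the record
   X_k exceeds X_j, so the conditional probability is just F(v)^k. With u = a_n y_1 + b_n and
   v = a_n y_2 + b_n, each power F(a_n y + b_n)^m with m/n -> lambda tends to G(y)^lambda,
   because F(a_n y + b_n)^m = exp((m/n) ln F(a_n y + b_n)^n). *)

From Stdlib Require Import Reals Lra Lia ClassicalEpsilon FunctionalExtensionality PropExtensionality.
Open Scope R_scope.

(** * Probability spaces *)

Lemma pred_ext {T} (A B : T -> Prop) : (forall w, A w <-> B w) -> A = B.
Proof.
  intros H; apply functional_extensionality; intro w; apply propositional_extensionality; auto.
Qed.

Section ProbabilityBasics.
Context {Omega : Type} {Sp : ProbSpace Omega}.
Notation P := (prob Sp).
Notation M := (meas Sp).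

Lemma meas_False : M (fun _ => False).
Proof.
  replace (fun _ : Omega => False) with (fun _ : Omega => ~ True) by (apply pred_ext; tauto).
  apply meas_compl, meas_full.
Qed.

Lemma meas_or (A B : Omega -> Prop) : M A -> M B -> M (fun w => A w \/ B w).
Proof.
  intros HA HB.
  replace (fun w => A w \/ B w) with (fun w => exists n, (match n with O => A | _ => B end) w).
  - apply meas_cunion; intros [|n]; auto.
  - apply pred_ext; intro w; split.
    + intros [[|n] H]; auto.
    + intros [H|H]; [exists O|exists 1%nat]; auto.
Qed.

Lemma meas_and (A B : Omega -> Prop) : M A -> M B -> M (fun w => A w /\ B w).
Proof.
  intros HA HB.
  replace (fun w => A w /\ B w) with (fun w => ~ (~ A w \/ ~ B w)).
  - apply meas_compl, meas_or; apply meas_compl; auto.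
  - apply pred_ext; intro w; destruct (classic (A w)); destruct (classic (B w)); tauto.
Qed.

Lemma meas_exists_range (A : nat -> Omega -> Prop) a b :
  (forall r, (a <= r <= b)%nat -> M (A r)) ->
  M (fun w => exists r, (a <= r <= b)%nat /\ A r w).
Proof.
  intros HA. apply (meas_cunion _ Sp (fun r w => (a <= r <= b)%nat /\ A r w)). intros r.
  destruct (classic (a <= r <= b)%nat).
  - rewrite (pred_ext _ (A r)) by tauto; auto.
  - rewrite (pred_ext _ (fun _ : Omega => False)) by tauto; apply meas_False.
Qed.

Lemma prob_ext (A B : Omega -> Prop) : (forall w, A w <-> B w) -> P A = P B.
Proof. intros H; rewrite (pred_ext A B H); auto. Qed.

Lemma prob_False : P (fun _ => False) = 0.
Proof.
  pose proof (prob_sigma_additive _ Sp (fun _ _ => False) (fun _ => meas_False)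
                (fun _ _ _ _ f _ => f)) as H; cbv beta in H.
  rewrite (pred_ext (fun _ => exists _ : nat, False) (fun _ => False)) in H
    by (intro w; split; [intros [_ []]|tauto]).
  set (c := P (fun _ => False)) in *.
  assert (Hsum : forall n, sum_f_R0 (fun _ => c) n = INR (S n) * c).
  { induction n; simpl sum_f_R0; [simpl; ring|rewrite IHn, !S_INR; ring]. }
  assert (Hc : 0 <= c) by apply prob_nonneg, meas_False.
  destruct (Req_dec c 0) as [E|E]; auto.
  destruct (H (c / 2)) as [N HN]; [lra|].
  specialize (HN (S N) (Nat.le_succ_diag_r N)).
  unfold R_dist in HN; rewrite Hsum, !S_INR in HN.
  pose proof (pos_INR N). rewrite Rabs_right in HN; nra.
Qed.

Lemma prob_finite_union (A : nat -> Omega -> Prop) m :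
  (forall n, M (A n)) ->
  (forall n n' w, n <> n' -> A n w -> A n' w -> False) ->
  (forall n w, (n > m)%nat -> ~ A n w) ->
  P (fun w => exists n, A n w) = sum_f_R0 (fun n => P (A n)) m.
Proof.
  intros HM Hdisj Hout.
  apply (uniqueness_sum (fun n => P (A n))); [apply prob_sigma_additive; auto|].
  intros eps Heps; exists m; intros n Hn.
  replace (sum_f_R0 (fun n => P (A n)) n) with (sum_f_R0 (fun n => P (A n)) m).
  { unfold R_dist; rewrite Rminus_diag, Rabs_R0; auto. }
  induction Hn; auto. simpl; rewrite <- IHHn.
  rewrite (pred_ext (A (S m0)) (fun _ => False)) by (intro w; split; [apply Hout; lia|tauto]).
  rewrite prob_False; ring.
Qed.

Lemma prob_disjoint_or (A B : Omega -> Prop) : M A -> M B ->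
  (forall w, A w -> B w -> False) -> P (fun w => A w \/ B w) = P A + P B.
Proof.
  intros HA HB Hdisj.
  pose (C := fun n : nat => match n with O => A | 1%nat => B | _ => fun _ => False end).
  rewrite (prob_ext _ (fun w => exists n, C n w)).
  - rewrite (prob_finite_union C 1); [simpl; ring| | |].
    + intros [|[|n]]; simpl; auto using meas_False.
    + intros [|[|n]] [|[|n']] w H; simpl; intros; try lia; eauto.
    + intros [|[|n]] w H; simpl; auto; lia.
  - intro w; split.
    + intros [H|H]; [exists O|exists 1%nat]; auto.
    + intros [[|[|n]] H]; simpl in H; tauto.
Qed.

Lemma prob_split (A B : Omega -> Prop) : M A -> M B ->
  P A = P (fun w => A w /\ B w) + P (fun w => A w /\ ~ B w).
Proof.
  intros HA HB. rewrite <- prob_disjoint_or.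
  - apply prob_ext; intro w; destruct (classic (B w)); tauto.
  - apply meas_and; auto.
  - apply meas_and; auto using meas_compl.
  - tauto.
Qed.

Lemma prob_compl (A : Omega -> Prop) : M A -> P (fun w => ~ A w) = 1 - P A.
Proof.
  intros HA. rewrite <- (prob_full _ Sp), (prob_split (fun _ => True) A); auto using meas_full.
  rewrite (prob_ext (fun w => True /\ A w) A), (prob_ext (fun w => True /\ ~ A w) (fun w => ~ A w))
    by tauto.
  ring.
Qed.

Lemma prob_diff (A B : Omega -> Prop) : M A -> M B -> (forall w, B w -> A w) ->
  P (fun w => A w /\ ~ B w) = P A - P B.
Proof.
  intros HA HB HBA. rewrite (prob_split A B HA HB), (prob_ext (fun w => A w /\ B w) B)
    by (intro w; split; [tauto|auto]).
  ring.
Qed.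

Lemma prob_mono (A B : Omega -> Prop) : M A -> M B -> (forall w, A w -> B w) -> P A <= P B.
Proof.
  intros HA HB HAB.
  assert (HBA : M (fun w => B w /\ ~ A w)) by auto using meas_and, meas_compl.
  pose proof (prob_diff B A HB HA HAB). pose proof (prob_nonneg _ Sp _ HBA). lra.
Qed.

Lemma prob_le1 (A : Omega -> Prop) : M A -> P A <= 1.
Proof. intros; rewrite <- (prob_full _ Sp); apply prob_mono; auto using meas_full. Qed.

Lemma prob_or_le (A B : Omega -> Prop) : M A -> M B -> P (fun w => A w \/ B w) <= P A + P B.
Proof.
  intros HA HB.
  assert (HBA : M (fun w => B w /\ ~ A w)) by auto using meas_and, meas_compl.
  rewrite (prob_ext _ (fun w => A w \/ (B w /\ ~ A w)))
    by (intro w; destruct (classic (A w)); tauto).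
  rewrite prob_disjoint_or by (auto; tauto).
  enough (P (fun w => B w /\ ~ A w) <= P B) by lra.
  apply prob_mono; tauto.
Qed.

Lemma prob_and_almost_sure (A N : Omega -> Prop) : M A -> M N ->
  P (fun w => ~ N w) = 0 -> P A = P (fun w => A w /\ N w).
Proof.
  intros HA HN H0.
  assert (HAN : M (fun w => A w /\ ~ N w)) by auto using meas_and, meas_compl.
  assert (P (fun w => A w /\ ~ N w) <= 0)
    by (rewrite <- H0; apply prob_mono; auto using meas_compl; tauto).
  pose proof (prob_nonneg _ Sp _ HAN). rewrite (prob_split A N HA HN). lra.
Qed.

Lemma prob_increasing_union (A : nat -> Omega -> Prop) :
  (forall n, M (A n)) -> (forall n w, A n w -> A (S n) w) ->
  Un_cv (fun n => P (A n)) (P (fun w => exists n, A n w)).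
Proof.
  intros HM Hinc.
  assert (Hmono : forall n m w, (n <= m)%nat -> A n w -> A m w)
    by (intros n m w H; induction H; auto).
  pose (D := fun n w => match n with O => A O w | S m => A (S m) w /\ ~ A m w end).
  assert (HD : forall n, M (D n))
    by (intros [|n]; unfold D; auto using meas_and, meas_compl).
  assert (Hpartial : forall n, P (A n) = sum_f_R0 (fun i => P (D i)) n).
  { induction n; simpl; auto.
    rewrite <- IHn, (prob_split (A (S n)) (A n)) by auto.
    rewrite (prob_ext (fun w => A (S n) w /\ A n w) (A n)) by (intro; split; [tauto|auto]).
    auto. }
  assert (Hdisj : forall n m w, n <> m -> D n w -> D m w -> False).
  { assert (Hlt : forall n m w, (n < m)%nat -> D n w -> D m w -> False).
    { intros n [|m] w Hnm Hn Hm; [lia|]. destruct Hm as [_ Hm].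
      apply Hm, (Hmono n); [lia|]. destruct n; simpl in Hn; tauto. }
    intros n m w Hnm; destruct (Nat.lt_gt_cases n m) as [[H|H] _]; eauto. }
  rewrite (prob_ext _ (fun w => exists n, D n w)).
  - intros eps Heps.
    destruct (prob_sigma_additive _ Sp D HD Hdisj eps Heps) as [N HN].
    exists N; intros n Hn; rewrite Hpartial; auto.
  - intro w; split.
    + intros [n Hn]; induction n.
      * exists O; auto.
      * destruct (classic (A n w)); auto. exists (S n); simpl; auto.
    + intros [[|n] Hn]; simpl in Hn; [exists O|exists (S n)]; tauto.
Qed.

Lemma prob_exists_range_le (A : nat -> Omega -> Prop) a b c : (forall r, M (A r)) ->
  (forall r, (a <= r <= b)%nat -> P (A r) <= c) -> 0 <= c ->
  P (fun w => exists r, (a <= r <= b)%nat /\ A r w) <= INR (S b - a) * c.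
Proof.
  intros HM Hc Hc0.
  assert (Hmeas : forall b, M (fun w => exists r, (a <= r <= b)%nat /\ A r w))
    by (intros; apply meas_exists_range; auto).
  induction b.
  - destruct (Nat.eq_dec a 0) as [->|].
    + simpl; rewrite Rmult_1_l.
      rewrite (prob_ext (fun w => exists r, (0 <= r <= 0)%nat /\ A r w) (A O)); [apply Hc; lia|].
      intro w; split; [intros [r [Hr H]]; replace r with O in H by lia; auto|exists O; auto].
    + rewrite (prob_ext _ (fun _ => False)), prob_False by (intro w; split; [intros [r [Hr _]]; lia|tauto]).
      apply Rmult_le_pos; auto using pos_INR.
  - destruct (Compare_dec.le_dec a (S b)).
    + apply Rle_trans with (P (fun w => (exists r, (a <= r <= b)%nat /\ A r w) \/ A (S b) w)).
      { apply prob_mono; auto using meas_or.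
        intros w [r [Hr H]]. destruct (Nat.eq_dec r (S b)) as [->|]; auto.
        left; exists r; split; auto; lia. }
      eapply Rle_trans; [apply prob_or_le; auto|].
      assert (P (fun w => exists r, (a <= r <= b)%nat /\ A r w) <= INR (S b - a) * c)
        by (apply IHb; intros; apply Hc; lia).
      assert (P (A (S b)) <= c) by (apply Hc; lia).
      replace (S (S b) - a)%nat with (S (S b - a)) by lia. rewrite S_INR. lra.
    + rewrite (prob_ext _ (fun _ => False)), prob_False by (intro w; split; [intros [r [Hr _]]; lia|tauto]).
      apply Rmult_le_pos; auto using pos_INR.
Qed.

Lemma prob_exists_range_disjoint (A : nat -> Omega -> Prop) a b c :
  (a <= S b)%nat -> (forall r, (a <= r <= b)%nat -> M (A r)) ->
  (forall r, (a <= r <= b)%nat -> P (A r) = c) ->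
  (forall r r' w, (a <= r <= b)%nat -> (a <= r' <= b)%nat -> r <> r' -> A r w -> A r' w -> False) ->
  P (fun w => exists r, (a <= r <= b)%nat /\ A r w) = INR (S b - a) * c.
Proof.
  intros Hab HM Hc Hdisj. induction b.
  - destruct (Nat.eq_dec a 0) as [->|].
    + simpl; rewrite Rmult_1_l, <- (Hc O) by lia.
      apply prob_ext; intro w; split; [intros [r [Hr H]]; replace r with O in H by lia; auto|].
      exists O; auto.
    + rewrite (prob_ext _ (fun _ => False)), prob_False by (intro w; split; [intros [r [Hr _]]; lia|tauto]).
      replace (1 - a)%nat with O by lia; simpl; ring.
  - destruct (Nat.eq_dec a (S (S b))) as [->|].
    + rewrite (prob_ext _ (fun _ => False)), prob_False by (intro w; split; [intros [r [Hr _]]; lia|tauto]).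
      rewrite Nat.sub_diag; simpl; ring.
    + rewrite (prob_ext _ (fun w => (exists r, (a <= r <= b)%nat /\ A r w) \/ A (S b) w)).
      * assert (Hunion : M (fun w => exists r, (a <= r <= b)%nat /\ A r w))
          by (apply meas_exists_range; intros; apply HM; lia).
        assert (HS : M (A (S b))) by (apply HM; lia).
        assert (Hd : forall w, (exists r, (a <= r <= b)%nat /\ A r w) -> A (S b) w -> False)
          by (intros w [r [Hr H1]] H2; apply (Hdisj r (S b) w); auto; lia).
        rewrite prob_disjoint_or, (Hc (S b)) by (auto || lia). rewrite IHb.
        -- replace (S (S b) - a)%nat with (S (S b - a)) by lia. rewrite S_INR; ring.
        -- lia.
        -- intros r Hr; apply HM; lia.
        -- intros r Hr; apply Hc; lia.
        -- intros r r' w Hr Hr'; apply Hdisj; lia.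
      * intro w; split.
        -- intros [r [Hr H]]. destruct (Nat.eq_dec r (S b)) as [->|]; auto.
           left; exists r; split; auto; lia.
        -- intros [[r [Hr H]]|H]; [exists r|exists (S b)]; split; auto; lia.
Qed.

End ProbabilityBasics.

(** * The lambda-system generated by rectangles *)

Lemma nat_above (r : R) : exists n : nat, r < INR n.
Proof. destruct (INR_archimed 1 r) as [n Hn]; [lra|]. exists n; lra. Qed.

Lemma nat_above_all (x : nat -> R) n : exists m : nat, forall l, (l <= n)%nat -> x l <= INR m.
Proof.
  induction n as [|n [m Hm]].
  - destruct (nat_above (x O)) as [m Hm]. exists m; intros l Hl.
    replace l with O by lia; lra.
  - destruct (nat_above (x (S n))) as [m' Hm'].
    exists (Nat.max m m'); intros l Hl.
    destruct (Nat.eq_dec l (S n)) as [->|].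
    + apply Rle_trans with (INR m'); [lra|apply le_INR; lia].
    + apply Rle_trans with (INR m); [apply Hm; lia|apply le_INR; lia].
Qed.

(* Rationals encoded by three naturals, so that unions over them are countable unions over [nat]. *)
Definition nat_ratio (p z1 z2 : nat) : R := (INR z1 - INR z2) / INR (S p).

Lemma nat_ratio_between a b : a < b -> exists p z1 z2, a < nat_ratio p z1 z2 < b.
Proof.
  intros Hab.
  destruct (nat_above (/ (b - a))) as [p Hp].
  assert (HS : 0 < INR (S p)) by (apply lt_0_INR; lia).
  assert (Hgap : 1 < (b - a) * INR (S p)).
  { rewrite S_INR. apply Rmult_lt_reg_l with (/ (b - a)); [apply Rinv_0_lt_compat; lra|].
    rewrite <- Rmult_assoc, Rinv_l; lra. }
  destruct (archimed (a * INR (S p))) as [Hz1 Hz2].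
  set (z := up (a * INR (S p))) in *.
  exists p, (Z.to_nat z), (Z.to_nat (- z)).
  assert (Hz : INR (Z.to_nat z) - INR (Z.to_nat (- z)) = IZR z)
    by (rewrite !INR_IZR_INZ, <- minus_IZR; f_equal; lia).
  unfold nat_ratio; rewrite Hz.
  split; [apply Rmult_lt_reg_r with (INR (S p))|apply Rmult_lt_reg_r with (INR (S p))];
    auto; unfold Rdiv; rewrite Rmult_assoc, Rinv_l; lra.
Qed.

Definition rect (N : nat) (c : nat -> R) (x : nat -> R) : Prop :=
  forall i, (1 <= i <= N)%nat -> x i <= c i.

Definition lambda_system (L : ((nat -> R) -> Prop) -> Prop) : Prop :=
  L (fun _ => True) /\ (forall f, L f -> L (fun x => ~ f x)) /\
  (forall fs : nat -> (nat -> R) -> Prop, (forall n, L (fs n)) ->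
     (forall n m x, n <> m -> fs n x -> fs m x -> False) -> L (fun x => exists n, fs n x)).

(* The least lambda-system containing the rectangles on the coordinates [1..N]: the events
   of [(X_1, ..., X_N)] whose probability is determined by the finite-dimensional
   distributions. *)
Definition dynkin (N : nat) (f : (nat -> R) -> Prop) : Prop :=
  forall L, lambda_system L -> (forall c, L (rect N c)) -> L f.

Definition strict_max_at (x : nat -> R) (a b i : nat) : Prop :=
  forall l, (a <= l <= b)%nat -> l <> i -> x l < x i.

(* [below None r] holds always: [None] stands for the bound [+oo]. *)
Definition below (o : option R) (r : R) : Prop :=
  match o with Some u => r <= u | None => True end.

Definition all_below (o : option R) (a b : nat) (x : nat -> R) : Prop :=
  forall i, (a <= i <= b)%nat -> below o (x i).

Section Dynkin.
Variable N : nat.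
Notation D := (dynkin N).

Lemma dynkin_lambda_system : lambda_system D.
Proof.
  split; [|split].
  - intros L HL _; apply HL.
  - intros f Hf L HL HR; apply HL, Hf; auto.
  - intros fs Hfs Hdisj L HL HR; apply HL; auto. intro n; apply Hfs; auto.
Qed.

Lemma dynkin_rect c : D (rect N c).
Proof. intros L _ HR; auto. Qed.

Lemma dynkin_True : D (fun _ => True).
Proof. apply dynkin_lambda_system. Qed.

Lemma dynkin_not f : D f -> D (fun x => ~ f x).
Proof. apply dynkin_lambda_system. Qed.

Lemma dynkin_False : D (fun _ => False).
Proof.
  rewrite (pred_ext _ (fun x : nat -> R => ~ True)) by tauto.
  apply dynkin_not, dynkin_True.
Qed.

Lemma dynkin_disjoint_or f g : D f -> D g -> (forall x, f x -> g x -> False) ->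
  D (fun x => f x \/ g x).
Proof.
  intros Hf Hg Hdisj.
  pose (C := fun n : nat => match n with O => f | 1%nat => g | _ => fun _ => False end).
  rewrite (pred_ext _ (fun x => exists n, C n x)).
  - apply dynkin_lambda_system.
    + intros [|[|n]]; simpl; auto using dynkin_False.
    + intros [|[|n]] [|[|n']] x H; simpl; intros; try lia; eauto.
  - intro x; split.
    + intros [H|H]; [exists O|exists 1%nat]; auto.
    + intros [[|[|n]] H]; simpl in H; tauto.
Qed.

Lemma lambda_system_and_with f : D f -> lambda_system (fun g => D (fun x => g x /\ f x)).
Proof.
  intros Hf; split; [|split].
  - rewrite (pred_ext _ f) by tauto; auto.
  - intros g Hg.
    rewrite (pred_ext _ (fun x => ~ ((g x /\ f x) \/ ~ f x)))
      by (intro x; destruct (classic (g x)); destruct (classic (f x)); tauto).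
    apply dynkin_not, dynkin_disjoint_or; auto using dynkin_not. tauto.
  - intros fs Hfs Hdisj.
    rewrite (pred_ext _ (fun x => exists n, (fun y => fs n y /\ f y) x))
      by (intro x; split; [intros [[n H1] H2]; exists n; auto|intros [n [H1 H2]]; split; eauto]).
    apply dynkin_lambda_system; auto. intros n m x Hnm [H1 _] [H2 _]; eauto.
Qed.

Lemma rect_and c c' :
  (fun x => rect N c x /\ rect N c' x) = rect N (fun i => Rmin (c i) (c' i)).
Proof.
  apply pred_ext; intro x; unfold rect; split.
  - intros [H1 H2] i Hi. apply Rmin_glb; auto.
  - intros H; split; intros i Hi; specialize (H i Hi);
      [apply (Rle_trans _ _ _ H (Rmin_l _ _))|apply (Rle_trans _ _ _ H (Rmin_r _ _))].
Qed.

(* The pi-lambda argument: rectangles are closed under intersection. *)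
Lemma dynkin_and f g : D f -> D g -> D (fun x => f x /\ g x).
Proof.
  intros Hf Hg. apply Hf; [apply lambda_system_and_with; auto|].
  intros c; cbv beta. rewrite (pred_ext _ (fun x => g x /\ rect N c x)) by tauto.
  apply Hg; [apply lambda_system_and_with, dynkin_rect|].
  intros c'; cbv beta; rewrite rect_and; apply dynkin_rect.
Qed.

Lemma dynkin_or f g : D f -> D g -> D (fun x => f x \/ g x).
Proof.
  intros Hf Hg.
  rewrite (pred_ext _ (fun x => ~ (~ f x /\ ~ g x))) by (intro x; destruct (classic (f x)); tauto).
  apply dynkin_not, dynkin_and; apply dynkin_not; auto.
Qed.

Lemma dynkin_guard_and (A : Prop) f : (A -> D f) -> D (fun x => A /\ f x).
Proof.
  intros H. destruct (classic A).
  - rewrite (pred_ext _ f) by tauto; auto.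
  - rewrite (pred_ext _ (fun _ : nat -> R => False)) by tauto; apply dynkin_False.
Qed.

Lemma dynkin_guard_impl (A : Prop) f : (A -> D f) -> D (fun x => A -> f x).
Proof.
  intros H. destruct (classic A).
  - rewrite (pred_ext _ f) by tauto; auto.
  - rewrite (pred_ext _ (fun _ : nat -> R => True)) by tauto; apply dynkin_True.
Qed.

Lemma dynkin_forall_lt (fs : nat -> (nat -> R) -> Prop) n : (forall m, D (fs m)) ->
  D (fun x => forall m, (m < n)%nat -> fs m x).
Proof.
  intros H. induction n.
  - rewrite (pred_ext _ (fun _ : nat -> R => True)) by (intro x; split; auto; intros _ m Hm; lia).
    apply dynkin_True.
  - rewrite (pred_ext _ (fun x => (forall m, (m < n)%nat -> fs m x) /\ fs n x)).
    + apply dynkin_and; auto.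
    + intro x; split.
      * intros H1; split; auto.
      * intros [H1 H2] m Hm. destruct (Nat.eq_dec m n) as [->|]; auto. apply H1; lia.
Qed.

Lemma dynkin_exists (fs : nat -> (nat -> R) -> Prop) : (forall n, D (fs n)) ->
  D (fun x => exists n, fs n x).
Proof.
  intros H.
  (* make the union disjoint by keeping only the first index that holds *)
  pose (gs := fun n x => fs n x /\ forall m, (m < n)%nat -> ~ fs m x).
  rewrite (pred_ext _ (fun x => exists n, gs n x)).
  - apply dynkin_lambda_system.
    + intros n. apply dynkin_and; auto. apply dynkin_forall_lt; intros; apply dynkin_not; auto.
    + intros n m x Hnm [H1 H2] [H3 H4].
      destruct (Nat.lt_gt_cases n m) as [[Hl|Hl] _]; auto; [apply (H4 n)|apply (H2 m)]; auto.
  - intro x; split.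
    + intros [n Hn].
      induction n as [n IH] using (well_founded_induction Wf_nat.lt_wf).
      destruct (classic (exists m, (m < n)%nat /\ fs m x)) as [[m [Hm1 Hm2]]|Hno].
      * apply (IH m); auto.
      * exists n; split; auto. intros m Hm Hf; apply Hno; eauto.
    + intros [n [Hn _]]; eauto.
Qed.

Lemma dynkin_forall_range (fs : nat -> (nat -> R) -> Prop) a b :
  (forall m, (a <= m <= b)%nat -> D (fs m)) ->
  D (fun x => forall m, (a <= m <= b)%nat -> fs m x).
Proof.
  intros H.
  rewrite (pred_ext _ (fun x => forall m, (m < S b)%nat -> (fun y => (a <= m <= b)%nat -> fs m y) x))
    by (intro x; split; intros H1 m Hm; [intros; apply H1; lia|apply H1; lia]).
  apply dynkin_forall_lt; intros m; apply dynkin_guard_impl; auto.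
Qed.

Lemma dynkin_exists_range (fs : nat -> (nat -> R) -> Prop) a b :
  (forall m, (a <= m <= b)%nat -> D (fs m)) ->
  D (fun x => exists m, (a <= m <= b)%nat /\ fs m x).
Proof.
  intros H. apply (dynkin_exists (fun m y => (a <= m <= b)%nat /\ fs m y)).
  intros m; apply dynkin_guard_and; auto.
Qed.

Lemma dynkin_le i c : (1 <= i <= N)%nat -> D (fun x => x i <= c).
Proof.
  intros Hi.
  rewrite (pred_ext _ (fun x => exists m : nat, rect N (fun l => if Nat.eqb l i then c else INR m) x)).
  - apply dynkin_exists; intros; apply dynkin_rect.
  - intro x; split.
    + intros H. destruct (nat_above_all x N) as [m Hm]. exists m; intros l Hl.
      destruct (Nat.eqb_spec l i) as [->|]; auto. apply Hm; lia.
    + intros [m Hm]. specialize (Hm i Hi); cbv beta in Hm. rewrite Nat.eqb_refl in Hm; auto.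
Qed.

Lemma dynkin_gt i c : (1 <= i <= N)%nat -> D (fun x => c < x i).
Proof.
  intros Hi. rewrite (pred_ext _ (fun x => ~ x i <= c)) by (intro x; split; intros; lra).
  apply dynkin_not, dynkin_le; auto.
Qed.

Lemma dynkin_lt i l : (1 <= i <= N)%nat -> (1 <= l <= N)%nat -> D (fun x => x i < x l).
Proof.
  intros Hi Hl.
  rewrite (pred_ext _ (fun x => exists p, (fun y => exists z1, (fun y' => exists z2,
        (fun y'' => y'' i <= nat_ratio p z1 z2 /\ nat_ratio p z1 z2 < y'' l) y') y) x)).
  - do 3 (apply dynkin_exists; intros).
    apply dynkin_and; [apply dynkin_le|apply dynkin_gt]; auto.
  - intro x; split.
    + intros H. destruct (nat_ratio_between _ _ H) as [p [z1 [z2 Hq]]].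
      exists p, z1, z2. lra.
    + intros [p [z1 [z2 [H1 H2]]]]. lra.
Qed.

Lemma dynkin_eq i l : (1 <= i <= N)%nat -> (1 <= l <= N)%nat -> D (fun x => x i = x l).
Proof.
  intros Hi Hl.
  rewrite (pred_ext _ (fun x => ~ (x i < x l \/ x l < x i)))
    by (intro x; split; [lra|intros H; destruct (Rtotal_order (x i) (x l)) as [|[|]]; tauto]).
  apply dynkin_not, dynkin_or; apply dynkin_lt; auto.
Qed.

Lemma dynkin_strict_max_at a b i : (1 <= a)%nat -> (b <= N)%nat -> (1 <= i <= N)%nat ->
  D (fun x => strict_max_at x a b i).
Proof.
  intros. apply dynkin_forall_range; intros m Hm.
  apply dynkin_guard_impl; intros _. apply dynkin_lt; lia.
Qed.

Lemma dynkin_below o i : (1 <= i <= N)%nat -> D (fun x => below o (x i)).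
Proof. intros Hi. destruct o; simpl; [apply dynkin_le; auto|apply dynkin_True]. Qed.

Lemma dynkin_all_below o a b : (1 <= a)%nat -> (b <= N)%nat -> D (all_below o a b).
Proof. intros. apply dynkin_forall_range; intros m Hm. apply dynkin_below; lia. Qed.

End Dynkin.

Ltac dynkin_auto :=
  repeat (first [ apply dynkin_True | apply dynkin_le | apply dynkin_gt | apply dynkin_lt
                | apply dynkin_eq | apply dynkin_strict_max_at | apply dynkin_below
                | apply dynkin_all_below | apply dynkin_and | apply dynkin_or
                | apply dynkin_not ]);
  try lia.

(** * Exchangeability *)

Definition swap_index (s t i : nat) : nat :=
  if Nat.eqb i s then t else if Nat.eqb i t then s else i.

Definition swap_coords (s t : nat) (x : nat -> R) : nat -> R := fun i => x (swap_index s t i).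

Lemma swap_index_involutive s t i : swap_index s t (swap_index s t i) = i.
Proof.
  unfold swap_index.
  destruct (Nat.eqb_spec i s); destruct (Nat.eqb_spec i t); subst.
  - rewrite Nat.eqb_refl; auto.
  - destruct (Nat.eqb_spec t s); [lia|]. rewrite Nat.eqb_refl; auto.
  - rewrite Nat.eqb_refl; auto.
  - destruct (Nat.eqb_spec i s); [lia|]. destruct (Nat.eqb_spec i t); [lia|auto].
Qed.

Lemma swap_index_l s t : swap_index s t s = t.
Proof. unfold swap_index; rewrite Nat.eqb_refl; auto. Qed.

Lemma swap_index_r s t : swap_index s t t = s.
Proof. unfold swap_index; destruct (Nat.eqb_spec t s); subst; auto; rewrite Nat.eqb_refl; auto. Qed.

Lemma swap_index_other s t i : i <> s -> i <> t -> swap_index s t i = i.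
Proof. intros; unfold swap_index; destruct (Nat.eqb_spec i s); destruct (Nat.eqb_spec i t); lia. Qed.

Lemma swap_index_range s t i a b : (a <= s <= b)%nat -> (a <= t <= b)%nat ->
  (a <= i <= b)%nat -> (a <= swap_index s t i <= b)%nat.
Proof. intros; unfold swap_index; destruct (Nat.eqb_spec i s); destruct (Nat.eqb_spec i t); lia. Qed.

Lemma swap_index_eq_iff s t i l : swap_index s t l = i <-> l = swap_index s t i.
Proof. split; intros H; subst; rewrite swap_index_involutive; auto. Qed.

Lemma prod1n_ext f g n : (forall i, (1 <= i <= n)%nat -> f i = g i) -> prod1n f n = prod1n g n.
Proof.
  induction n; simpl; auto. intros H. rewrite IHn, H; [auto|lia|intros; apply H; lia].
Qed.

Lemma prod1n_const A n : prod1n (fun _ => A) n = A ^ n.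
Proof. induction n; simpl; auto. rewrite IHn; ring. Qed.

Lemma prod1n_split A B j n : (j <= n)%nat ->
  prod1n (fun i => if Nat.leb i j then A else B) n = A ^ j * B ^ (n - j).
Proof.
  intros H. induction H.
  - rewrite <- prod1n_const, Nat.sub_diag, Rmult_1_r.
    apply prod1n_ext; intros i Hi; destruct (Nat.leb_spec i j); auto; lia.
  - cbn [prod1n]. rewrite IHle. destruct (Nat.leb_spec (S m) j); [lia|].
    replace (S m - j)%nat with (S (m - j)) by lia. simpl; ring.
Qed.

Lemma prod1n_update g s v n : (1 <= s <= n)%nat ->
  prod1n (fun i => if Nat.eqb i s then v else g i) n * g s = prod1n g n * v.
Proof.
  induction n; intros Hs; [lia|]. cbn [prod1n].
  destruct (Nat.eq_dec s (S n)) as [->|].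
  - rewrite Nat.eqb_refl, (prod1n_ext _ g n); [ring|].
    intros i Hi; destruct (Nat.eqb_spec i (S n)); auto; lia.
  - destruct (Nat.eqb_spec (S n) s); [lia|].
    replace (prod1n g n * g (S n) * v) with (prod1n g n * v * g (S n)) by ring.
    rewrite <- (IHn ltac:(lia)); ring.
Qed.

Lemma prod1n_swap g s t n : (1 <= s <= n)%nat -> (1 <= t <= n)%nat ->
  prod1n (fun i => g (swap_index s t i)) n = prod1n g n.
Proof.
  destruct (Nat.eq_dec s t) as [->|Hst].
  { intros; apply prod1n_ext; intros i Hi; unfold swap_index.
    destruct (Nat.eqb_spec i t); subst; auto. }
  induction n; intros Hs Ht; [lia|]. cbn [prod1n].
  destruct (Nat.eq_dec s (S n)); destruct (Nat.eq_dec t (S n)); try lia; subst.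
  - rewrite swap_index_l, (prod1n_ext _ (fun i => if Nat.eqb i t then g (S n) else g i) n).
    + rewrite prod1n_update; [ring|lia].
    + intros i Hi. unfold swap_index. destruct (Nat.eqb_spec i (S n)); [lia|].
      destruct (Nat.eqb i t); auto.
  - rewrite swap_index_r, (prod1n_ext _ (fun i => if Nat.eqb i s then g (S n) else g i) n).
    + rewrite prod1n_update; [ring|lia].
    + intros i Hi. unfold swap_index. destruct (Nat.eqb_spec i s); auto.
      destruct (Nat.eqb_spec i (S n)); [lia|auto].
  - rewrite swap_index_other, IHn by lia; auto.
Qed.

Lemma rect_swap N c s t : (1 <= s <= N)%nat -> (1 <= t <= N)%nat ->
  (fun x => rect N c (swap_coords s t x)) = rect N (swap_coords s t c).
Proof.
  intros Hs Ht. apply pred_ext; intro x; unfold rect, swap_coords; split; intros H i Hi;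
    specialize (H (swap_index s t i) (swap_index_range s t i 1 N Hs Ht Hi));
    rewrite swap_index_involutive in H; auto.
Qed.

Section IidSample.
Context {Omega : Type} (Sp : ProbSpace Omega) (X : nat -> Omega -> R) (F : R -> R).
Hypothesis Hiid : iid_with_cdf Sp X F.
Notation P := (prob Sp).
Notation M := (meas Sp).

Definition event (f : (nat -> R) -> Prop) : Omega -> Prop := fun w => f (fun i => X i w).

Lemma meas_rect N c : M (event (rect N c)).
Proof.
  unfold event, rect. induction N.
  - rewrite (pred_ext _ (fun _ : Omega => True)) by (intro w; split; auto; intros _ i Hi; lia).
    apply meas_full.
  - rewrite (pred_ext _ (fun w => (forall i, (1 <= i <= N)%nat -> X i w <= c i) /\ X (S N) w <= c (S N))).
    + apply meas_and; auto. apply (proj1 Hiid).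
    + intro w; split.
      * intros H; split; [intros i Hi|]; apply H; lia.
      * intros [H1 H2] i Hi. destruct (Nat.eq_dec i (S N)) as [->|]; auto. apply H1; lia.
Qed.

Lemma prob_rect N c : P (event (rect N c)) = prod1n (fun i => F (c i)) N.
Proof. apply (proj2 Hiid). Qed.

Lemma meas_dynkin N f : dynkin N f -> M (event f).
Proof.
  intros H. apply H; [|apply meas_rect].
  split; [|split].
  - apply meas_full.
  - intros g Hg. apply meas_compl; auto.
  - intros fs Hfs _. apply meas_cunion; auto.
Qed.

Lemma lambda_system_swap_invariant N s t :
  (1 <= s <= N)%nat -> (1 <= t <= N)%nat ->
  lambda_system (fun f => M (event f) /\ M (event (fun x => f (swap_coords s t x))) /\
                          P (event f) = P (event (fun x => f (swap_coords s t x)))).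
Proof.
  intros Hs Ht. split; [|split].
  - repeat split; auto using meas_full.
  - intros g [H1 [H2 H3]]. repeat split; try apply meas_compl; auto.
    unfold event in *. rewrite (prob_compl _ H1), (prob_compl _ H2), H3; auto.
  - intros fs Hfs Hdisj.
    assert (Hdisj' : forall n m w, n <> m -> event (fs n) w -> event (fs m) w -> False)
      by (intros n m w Hnm; apply Hdisj; auto).
    repeat split.
    + apply meas_cunion; intro n; apply Hfs.
    + apply (meas_cunion _ Sp (fun n => event (fun x => fs n (swap_coords s t x)))).
      intro n; apply Hfs.
    + apply (uniqueness_sum (fun n => P (event (fs n)))).
      * apply prob_sigma_additive; auto. intro n; apply Hfs.
      * rewrite (functional_extensionality _ (fun n => P (event (fun x => fs n (swap_coords s t x)))))
          by (intro n; apply Hfs).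
        apply (prob_sigma_additive _ Sp (fun n => event (fun x => fs n (swap_coords s t x)))).
        -- intro n; apply Hfs.
        -- intros n m w Hnm; apply Hdisj; auto.
Qed.

Lemma prob_swap_coords N (f g : (nat -> R) -> Prop) s t :
  (1 <= s <= N)%nat -> (1 <= t <= N)%nat -> dynkin N f ->
  (forall x, g x <-> f (swap_coords s t x)) -> P (event g) = P (event f).
Proof.
  intros Hs Ht Hf Hg.
  enough (HP : P (event f) = P (event (fun x => f (swap_coords s t x)))).
  { rewrite HP. apply prob_ext; intro w; apply Hg. }
  apply (Hf (fun f => M (event f) /\ M (event (fun x => f (swap_coords s t x))) /\
                      P (event f) = P (event (fun x => f (swap_coords s t x)))));
    [apply (lambda_system_swap_invariant N); auto|].
  intros c. repeat split; [apply meas_rect| |]; rewrite rect_swap by auto; [apply meas_rect|].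
  rewrite !prob_rect. symmetry. apply (prod1n_swap (fun i => F (c i))); auto.
Qed.

End IidSample.

(** * Ties have probability zero *)

Lemma value_in_grid (t : nat -> R) n z : (1 <= n)%nat ->
  z <= t 1%nat \/ t n < z \/ exists r, (2 <= r <= n)%nat /\ t (pred r) < z <= t r.
Proof.
  intros Hn. induction Hn as [|m Hm [H|[H|[r [Hr H]]]]].
  - destruct (Rle_dec z (t 1%nat)); [left|right; left]; lra.
  - auto.
  - destruct (Rle_dec z (t (S m))).
    + right; right. exists (S m). split; [lia|]. simpl; lra.
    + right; left; lra.
  - right; right. exists r; split; auto; lia.
Qed.

Definition in_same_cell (t : nat -> R) (r : nat) (x : nat -> R) : Prop :=
  (t (pred r) < x 1%nat <= t r) /\ (t (pred r) < x 2%nat <= t r).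

Section Ties.
Context {Omega : Type} (Sp : ProbSpace Omega) (X : nat -> Omega -> R) (F : R -> R).
Hypothesis Hiid : iid_with_cdf Sp X F.
Hypothesis HFc : continuity F.
Notation P := (prob Sp).
Notation M := (meas Sp).
Notation ev := (event X).
Notation meas_dynkin := (meas_dynkin Sp X F Hiid).

Lemma meas_le i c : M (ev (fun x => x i <= c)).
Proof. apply (proj1 Hiid). Qed.

Lemma cdf_eq s : F s = P (ev (fun x => x 1%nat <= s)).
Proof.
  pose proof (prob_rect Sp X F Hiid 1 (fun _ => s)) as H; simpl in H.
  rewrite Rmult_1_l in H. rewrite <- H.
  apply prob_ext; intro w; unfold event, rect; split.
  - intros H1; apply H1; lia.
  - intros H1 i Hi. replace i with 1%nat by lia; auto.
Qed.

Lemma cdf2_eq s t : P (ev (fun x => x 1%nat <= s /\ x 2%nat <= t)) = F s * F t.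
Proof.
  pose proof (prob_rect Sp X F Hiid 2 (fun i => if Nat.eqb i 1 then s else t)) as H; simpl in H.
  rewrite Rmult_1_l in H. rewrite <- H.
  apply prob_ext; intro w; unfold event, rect; split.
  - intros [H1 H2] i Hi. destruct i as [|[|[|i]]]; simpl; auto; lia.
  - intros H1; split; [apply (H1 1%nat)|apply (H1 2%nat)]; lia.
Qed.

Lemma cdf_mono s t : s <= t -> F s <= F t.
Proof. intros H. rewrite !cdf_eq. apply prob_mono; try apply meas_le. unfold event; intros w; lra. Qed.

Lemma cdf_range s : 0 <= F s <= 1.
Proof. rewrite cdf_eq. split; [apply prob_nonneg|apply prob_le1]; apply meas_le. Qed.

Lemma cdf_near_one eps : 0 < eps -> exists y, 1 - eps < F y.
Proof.
  intros He.
  pose proof (prob_increasing_union (fun m => ev (fun x => x 1%nat <= INR m))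
                (fun m => meas_le _ _)) as H; cbv beta in H.
  rewrite (pred_ext _ (fun _ : Omega => True)), prob_full in H.
  - destruct (H ltac:(intros n w; unfold event; rewrite S_INR; lra) eps He) as [N HN].
    exists (INR N). rewrite cdf_eq. specialize (HN N (le_n N)).
    unfold R_dist in HN; apply Rabs_def2 in HN. lra.
  - intro w; split; auto. intros _. destruct (nat_above (X 1%nat w)) as [m Hm].
    exists m; unfold event; lra.
Qed.

Lemma cdf_near_zero eps : 0 < eps -> exists y, F y < eps.
Proof.
  intros He.
  pose proof (prob_increasing_union (fun m => ev (fun x => ~ x 1%nat <= - INR m))
                (fun m => meas_compl _ Sp _ (meas_le _ _))) as H; cbv beta in H.
  rewrite (pred_ext _ (fun _ : Omega => True)), prob_full in H.
  - destruct (H ltac:(intros n w; unfold event; rewrite S_INR; lra) eps He) as [N HN].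
    exists (- INR N). rewrite cdf_eq. specialize (HN N (le_n N)).
    unfold R_dist in HN; apply Rabs_def2 in HN.
    unfold event in *. rewrite prob_compl in HN; [lra|apply meas_le].
  - intro w; split; auto. intros _. destruct (nat_above (- X 1%nat w)) as [m Hm].
    exists m; unfold event; intro; lra.
Qed.

(* Continuity of [F] (intermediate value theorem) gives the quantiles of order [r/m]. *)
Lemma cdf_quantile_grid m : (2 <= m)%nat ->
  exists t : nat -> R, forall r, (1 <= r <= m - 1)%nat -> F (t r) = INR r / INR m.
Proof.
  intros Hm.
  assert (Hm0 : 0 < INR m) by (apply lt_0_INR; lia).
  destruct (cdf_near_zero (1 / INR m)) as [xl Hxl]; [apply Rdiv_lt_0_compat; lra|].
  destruct (cdf_near_one (1 / INR m)) as [xh Hxh]; [apply Rdiv_lt_0_compat; lra|].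
  apply (choice (fun r z => (1 <= r <= m - 1)%nat -> F z = INR r / INR m)). intros r.
  destruct (classic (1 <= r <= m - 1)%nat) as [Hr|]; [|exists 0; tauto].
  assert (Hr1 : 1 / INR m <= INR r / INR m)
    by (apply Rmult_le_compat_r; [left; apply Rinv_0_lt_compat; auto|apply (le_INR 1); lia]).
  assert (Hr2 : INR r / INR m <= 1 - 1 / INR m).
  { assert (INR (r + 1) <= INR m) by (apply le_INR; lia). rewrite plus_INR in H; simpl in H.
    replace (1 - 1 / INR m) with ((INR m - 1) / INR m) by (field; lra).
    apply Rmult_le_compat_r; [left; apply Rinv_0_lt_compat|]; lra. }
  assert (Hlh : xl < xh) by (destruct (Rlt_dec xl xh); auto; pose proof (cdf_mono xh xl); lra).
  destruct (IVT (fun z => F z - INR r / INR m) xl xh) as [z [_ Hz]]; auto; try (simpl; lra).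
  - apply continuity_minus; auto. apply continuity_const. intros ? ?; auto.
  - exists z; intros; lra.
Qed.

Lemma prob_same_cell s t : s <= t ->
  P (ev (fun x => (s < x 1%nat <= t) /\ (s < x 2%nat <= t))) = (F t - F s) * (F t - F s).
Proof.
  intros Hst.
  assert (HR : forall a b, M (ev (fun x => x 1%nat <= a /\ x 2%nat <= b)))
    by (intros; apply meas_and; apply meas_le).
  assert (HRdiff : forall a a' b b', M (ev (fun x => (x 1%nat <= a /\ x 2%nat <= b) /\
                                                  ~ (x 1%nat <= a' /\ x 2%nat <= b'))))
    by (intros; apply meas_dynkin with (N := 2%nat); dynkin_auto).
  assert (Hdiff : forall b, P (ev (fun x => (x 1%nat <= t /\ x 2%nat <= b) /\
                                             ~ (x 1%nat <= s /\ x 2%nat <= b))) = F t * F b - F s * F b).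
  { intros b. rewrite <- !cdf2_eq.
    apply (prob_diff (ev (fun x => x 1%nat <= t /\ x 2%nat <= b))
                     (ev (fun x => x 1%nat <= s /\ x 2%nat <= b))); auto.
    intros w; unfold event; intros [? ?]; lra. }
  replace ((F t - F s) * (F t - F s))
    with (F t * F t - F s * F t - (F t * F s - F s * F s)) by ring.
  rewrite <- !Hdiff, <- prob_diff; auto.
  - apply prob_ext; intro w; unfold event.
    destruct (Rle_dec (X 1%nat w) s); destruct (Rle_dec (X 2%nat w) s);
      destruct (Rle_dec (X 1%nat w) t); destruct (Rle_dec (X 2%nat w) t);
      split; intros; intuition lra.
  - intros w; unfold event; lra.
Qed.

Lemma prob_tie12_le_grid (t : nat -> R) n : (1 <= n)%nat ->
  P (ev (fun x => x 1%nat = x 2%nat))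
  <= P (ev (fun x => x 1%nat <= t 1%nat)) + P (ev (fun x => ~ x 1%nat <= t n))
     + P (ev (fun x => exists r, (2 <= r <= n)%nat /\ in_same_cell t r x)).
Proof.
  intros Hn.
  assert (Mlow : M (ev (fun x => x 1%nat <= t 1%nat))) by apply meas_le.
  assert (Mhigh : M (ev (fun x => ~ x 1%nat <= t n))) by (apply meas_dynkin with (N := 2%nat); dynkin_auto).
  assert (Mcells : M (ev (fun x => exists r, (2 <= r <= n)%nat /\ in_same_cell t r x)))
    by (apply meas_dynkin with (N := 2%nat), dynkin_exists_range; intros; unfold in_same_cell;
        dynkin_auto).
  eapply Rle_trans; [|apply Rplus_le_compat_r, prob_or_le; auto].
  eapply Rle_trans; [|apply prob_or_le; auto using meas_or].
  apply prob_mono; auto using meas_or.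
  - apply meas_dynkin with (N := 2%nat); dynkin_auto.
  - intros w Hw; unfold event, in_same_cell in *.
    destruct (value_in_grid t n (X 1%nat w)) as [H|[H|[r [Hr H]]]]; [lia| | |].
    + left; left; lra.
    + left; right; lra.
    + right; exists r; split; auto. rewrite <- Hw; lra.
Qed.

(* On the grid of quantiles of order [r/m], both values fall in a given inner cell with
   probability [1/m^2], and each of the two outer half-lines has probability [1/m]. *)
Lemma prob_tie12_le m : (2 <= m)%nat -> P (ev (fun x => x 1%nat = x 2%nat)) <= 3 / INR m.
Proof.
  intros Hm.
  assert (Hm0 : 0 < INR m) by (apply lt_0_INR; lia).
  destruct (cdf_quantile_grid m Hm) as [t Ht].
  assert (Hcell : forall r, (2 <= r <= m - 1)%nat ->
                    P (ev (in_same_cell t r)) <= 1 / INR m * (1 / INR m)).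
  { intros r Hr.
    assert (Hpred : INR r = INR (pred r) + 1) by (destruct r; [lia|]; simpl pred; apply S_INR).
    assert (Htr : F (t (pred r)) < F (t r))
      by (rewrite !Ht by lia; apply Rmult_lt_compat_r; [apply Rinv_0_lt_compat|]; lra).
    assert (t (pred r) <= t r)
      by (destruct (Rle_dec (t (pred r)) (t r)); auto; pose proof (cdf_mono (t r) (t (pred r))); lra).
    unfold in_same_cell; rewrite prob_same_cell, !Ht by (auto; lia).
    right; rewrite Hpred; field; lra. }
  assert (Hcells : P (ev (fun x => exists r, (2 <= r <= m - 1)%nat /\ in_same_cell t r x))
                   <= INR (m - 2) * (1 / INR m * (1 / INR m))).
  { replace (m - 2)%nat with (S (m - 1) - 2)%nat by lia.
    apply (prob_exists_range_le (fun r => ev (in_same_cell t r))); auto.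
    - intros r; apply meas_dynkin with (N := 2%nat); unfold in_same_cell; dynkin_auto.
    - apply Rmult_le_pos; left; apply Rdiv_lt_0_compat; lra. }
  assert (Hlow : P (ev (fun x => x 1%nat <= t 1%nat)) = 1 / INR m)
    by (rewrite <- cdf_eq, Ht by lia; auto).
  assert (Hhigh : P (ev (fun x => ~ x 1%nat <= t (m - 1)%nat)) = 1 / INR m).
  { rewrite (prob_ext _ (fun w => ~ ev (fun x => x 1%nat <= t (m - 1)%nat) w)) by (unfold event; tauto).
    rewrite prob_compl, <- cdf_eq, Ht, minus_INR by (lia || apply meas_le); simpl; field; lra. }
  pose proof (prob_tie12_le_grid t (m - 1) ltac:(lia)) as Hgrid.
  rewrite Hlow, Hhigh, minus_INR in * by lia.
  apply Rle_trans with (2 / INR m + (INR m - 2) * (1 / INR m * (1 / INR m))); [simpl in *; lra|].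
  apply Rmult_le_reg_r with (INR m * INR m); [nra|].
  field_simplify; [|lra|lra]. simpl. nra.
Qed.

Lemma prob_tie12 : P (ev (fun x => x 1%nat = x 2%nat)) = 0.
Proof.
  assert (Hnn : 0 <= P (ev (fun x => x 1%nat = x 2%nat)))
    by (apply prob_nonneg, meas_dynkin with (N := 2%nat); dynkin_auto).
  destruct (Rle_lt_or_eq_dec _ _ Hnn) as [Hp|]; auto. exfalso.
  set (p := P (ev (fun x => x 1%nat = x 2%nat))) in *.
  destruct (nat_above (3 / p)) as [m Hm].
  assert (H3 : 0 < 3 / p) by (apply Rdiv_lt_0_compat; lra).
  pose proof (prob_tie12_le (m + 2) ltac:(lia)) as Hle. fold p in Hle.
  rewrite plus_INR in Hle; simpl in Hle.
  apply (Rmult_le_compat_r (INR m + 2)) in Hle; [|pose proof (pos_INR m); lra].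
  unfold Rdiv in *. rewrite Rmult_assoc, Rinv_l in Hle by (pose proof (pos_INR m); lra).
  apply (Rmult_lt_compat_l p) in Hm; auto.
  rewrite <- Rmult_assoc, (Rmult_comm p 3), Rmult_assoc, Rinv_r in Hm by lra. nra.
Qed.

Lemma prob_tie N a b : (1 <= a <= N)%nat -> (1 <= b <= N)%nat -> a <> b ->
  P (ev (fun x => x a = x b)) = 0.
Proof.
  assert (Hgen : forall a b, (1 <= a <= N)%nat -> (2 <= b <= N)%nat -> a <> b ->
                             P (ev (fun x => x a = x b)) = 0).
  { clear a b; intros a b Ha Hb Hab. rewrite <- prob_tie12.
    rewrite (prob_swap_coords Sp X F Hiid N (fun x => x 1%nat = x b) _ 1 a); [|lia|lia|dynkin_auto|].
    - apply (prob_swap_coords Sp X F Hiid N _ _ 2 b); [lia|lia|dynkin_auto|].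
      intro x; unfold swap_coords. rewrite swap_index_l, (swap_index_other 2 b 1) by lia. tauto.
    - intro x; unfold swap_coords. rewrite swap_index_l, (swap_index_other 1 a b) by lia. tauto. }
  intros Ha Hb Hab. destruct (Nat.eq_dec b 1) as [->|]; [|apply Hgen; lia].
  rewrite (prob_ext _ (ev (fun x => x 1%nat = x a))) by (intro w; unfold event; split; congruence).
  apply Hgen; lia.
Qed.

Definition distinct (N : nat) (x : nat -> R) : Prop :=
  forall a, (1 <= a <= N)%nat -> forall b, (1 <= b <= N)%nat -> a <> b -> x a <> x b.

Lemma dynkin_distinct N : dynkin N (distinct N).
Proof.
  apply (dynkin_forall_range N (fun a x => forall b, (1 <= b <= N)%nat -> a <> b -> x a <> x b) 1 N).
  intros a Ha. apply dynkin_forall_range; intros b Hb.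
  apply dynkin_guard_impl; intros. dynkin_auto.
Qed.

Lemma prob_not_distinct N : P (ev (fun x => ~ distinct N x)) = 0.
Proof.
  pose (tie a b := ev (fun x => ((1 <= a)%nat /\ (1 <= b)%nat /\ a <> b) /\ x a = x b)).
  assert (Htie : forall a b, M (tie a b))
    by (intros a b; apply meas_dynkin with (N := Nat.max a b),
          dynkin_guard_and; intros; dynkin_auto).
  assert (Hrow : forall a, M (fun w => exists b, (1 <= b <= N)%nat /\ tie a b w))
    by (intros; apply meas_exists_range; auto).
  assert (Hrow0 : forall a, (1 <= a <= N)%nat ->
            P (fun w => exists b, (1 <= b <= N)%nat /\ tie a b w) <= 0).
  { intros a Ha. rewrite <- (Rmult_0_r (INR (S N - 1))).
    apply prob_exists_range_le; auto; [|lra].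
    intros b Hb. destruct (Nat.eq_dec a b).
    - rewrite (prob_ext _ (fun _ => False)), prob_False by (intro w; unfold tie, event; tauto); lra.
    - rewrite <- (prob_tie N a b) by auto. apply prob_mono; auto.
      + apply meas_dynkin with (N := N); dynkin_auto.
      + intros w; unfold tie, event; tauto. }
  assert (Hnn : 0 <= P (ev (fun x => ~ distinct N x)))
    by (apply prob_nonneg, meas_dynkin with (N := N), dynkin_not, dynkin_distinct).
  enough (P (ev (fun x => ~ distinct N x)) <= 0) by lra.
  apply Rle_trans with (P (fun w => exists a, (1 <= a <= N)%nat /\
                                      exists b, (1 <= b <= N)%nat /\ tie a b w)).
  - apply prob_mono; auto using meas_exists_range.
    + apply meas_dynkin with (N := N), dynkin_not, dynkin_distinct.
    + intros w Hw. unfold event, distinct in Hw.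
      apply Classical_Pred_Type.not_all_ex_not in Hw as [a Hw].
      apply Classical_Prop.imply_to_and in Hw as [Ha Hw].
      apply Classical_Pred_Type.not_all_ex_not in Hw as [b Hw].
      apply Classical_Prop.imply_to_and in Hw as [Hb Hw].
      apply Classical_Prop.imply_to_and in Hw as [Hab Hw].
      exists a; split; auto. exists b; split; auto. unfold tie, event.
      split; [repeat split; lia|apply NNPP; auto].
  - rewrite <- (Rmult_0_r (INR (S N - 1))). apply prob_exists_range_le; auto; lra.
Qed.

Lemma prob_and_distinct N f : dynkin N f -> P (ev f) = P (ev (fun x => f x /\ distinct N x)).
Proof.
  intros Hf. apply (prob_and_almost_sure (ev f) (ev (distinct N))).
  - apply (meas_dynkin N); auto.
  - apply (meas_dynkin N), dynkin_distinct.
  - apply prob_not_distinct.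
Qed.

End Ties.

(** * Counting records *)

Lemma below_trans o r r' : below o r -> r' <= r -> below o r'.
Proof. destruct o; simpl; auto; lra. Qed.

Lemma strict_max_at_unique x a b i i' : (a <= i <= b)%nat -> (a <= i' <= b)%nat ->
  strict_max_at x a b i -> strict_max_at x a b i' -> i = i'.
Proof.
  intros Hi Hi' H H'. destruct (Nat.eq_dec i i') as [|Hne]; auto.
  specialize (H i' Hi' (not_eq_sym Hne)). specialize (H' i Hi Hne). lra.
Qed.

Lemma exists_max_at (x : nat -> R) a b : (a <= b)%nat ->
  exists i, (a <= i <= b)%nat /\ forall l, (a <= l <= b)%nat -> x l <= x i.
Proof.
  intros Hab. induction Hab as [|m Hab [i [Hi H]]].
  - exists a. split; [lia|]. intros l Hl. replace l with a by lia. lra.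
  - destruct (Rle_dec (x (S m)) (x i)).
    + exists i. split; [lia|]. intros l Hl. destruct (Nat.eq_dec l (S m)) as [->|]; auto. apply H; lia.
    + exists (S m). split; [lia|]. intros l Hl.
      destruct (Nat.eq_dec l (S m)) as [->|]; [lra|]. specialize (H l ltac:(lia)). lra.
Qed.

Lemma exists_strict_max_at N x a b : distinct N x -> (1 <= a)%nat -> (a <= b <= N)%nat ->
  exists i, (a <= i <= b)%nat /\ strict_max_at x a b i.
Proof.
  intros Hx Ha Hab. destruct (exists_max_at x a b) as [i [Hi Hmax]]; [lia|].
  exists i; split; auto. intros l Hl Hli.
  destruct (Hmax l Hl); auto. exfalso; apply (Hx l ltac:(lia) i ltac:(lia) Hli); auto.
Qed.

Lemma strict_max_at_all_below o x a b i : (a <= i <= b)%nat -> strict_max_at x a b i ->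
  below o (x i) -> all_below o a b x.
Proof.
  intros Hi Hmax Hb l Hl. destruct (Nat.eq_dec l i) as [->|]; auto.
  apply (below_trans _ _ _ Hb). left; apply Hmax; auto.
Qed.

Lemma strict_max_at_swap x a b s t : (a <= s <= b)%nat -> (a <= t <= b)%nat ->
  strict_max_at (swap_coords s t x) a b t <-> strict_max_at x a b s.
Proof.
  intros Hs Ht. unfold strict_max_at, swap_coords. rewrite swap_index_r. split.
  - intros H l Hl Hls. specialize (H (swap_index s t l) (swap_index_range _ _ _ _ _ Hs Ht Hl)).
    rewrite swap_index_involutive in H. apply H.
    intros E. apply swap_index_eq_iff in E. rewrite swap_index_r in E. auto.
  - intros H l Hl Hlt. apply H; [apply swap_index_range; auto|].
    intros E. apply swap_index_eq_iff in E. rewrite swap_index_l in E. auto.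
Qed.

Lemma strict_max_at_swap_other x a b s t i : (a <= s <= b)%nat -> (a <= t <= b)%nat ->
  i <> s -> i <> t -> strict_max_at (swap_coords s t x) a b i <-> strict_max_at x a b i.
Proof.
  intros Hs Ht His Hit. unfold strict_max_at, swap_coords. rewrite (swap_index_other s t i) by auto.
  split.
  - intros H l Hl Hli. specialize (H (swap_index s t l) (swap_index_range _ _ _ _ _ Hs Ht Hl)).
    rewrite swap_index_involutive in H. apply H.
    intros E. apply swap_index_eq_iff in E. rewrite swap_index_other in E; auto.
  - intros H l Hl Hli. apply H; [apply swap_index_range; auto|].
    intros E. apply swap_index_eq_iff in E. rewrite swap_index_other in E; auto.
Qed.

Lemma all_below_swap_outside o x a b s t : ~ (a <= s <= b)%nat -> ~ (a <= t <= b)%nat ->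
  all_below o a b (swap_coords s t x) <-> all_below o a b x.
Proof.
  intros Hs Ht. unfold all_below, swap_coords.
  split; intros H i Hi; specialize (H i Hi); rewrite swap_index_other in *; auto; lia.
Qed.

Section Exchangeable.
Context {Omega : Type} (Sp : ProbSpace Omega) (X : nat -> Omega -> R) (F : R -> R).
Hypothesis Hiid : iid_with_cdf Sp X F.
Hypothesis HFc : continuity F.
Notation P := (prob Sp).
Notation ev := (event X).

Lemma prob_eq_on_distinct N (f g : (nat -> R) -> Prop) : dynkin N f -> dynkin N g ->
  (forall x, distinct N x -> (f x <-> g x)) -> P (ev f) = P (ev g).
Proof.
  intros Hf Hg Hfg. rewrite (prob_and_distinct Sp X F Hiid HFc N f), (prob_and_distinct Sp X F Hiid HFc N g)
    by auto.
  apply prob_ext; intro w; unfold event. specialize (Hfg (fun i => X i w)). tauto.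
Qed.

Lemma prob_exists_exchangeable N (psi : nat -> (nat -> R) -> Prop) a b i0 :
  (1 <= a)%nat -> (b <= N)%nat -> (a <= i0 <= b)%nat ->
  (forall i, (a <= i <= b)%nat -> dynkin N (psi i)) ->
  (forall i x, (a <= i <= b)%nat -> psi i x <-> psi i0 (swap_coords i i0 x)) ->
  (forall i i' x, (a <= i <= b)%nat -> (a <= i' <= b)%nat -> i <> i' -> psi i x -> psi i' x -> False) ->
  P (ev (fun x => exists i, (a <= i <= b)%nat /\ psi i x)) = INR (S b - a) * P (ev (psi i0)).
Proof.
  intros Ha Hb Hi0 Hd Hswap Hdisj. apply prob_exists_range_disjoint; [lia| | |].
  - intros i Hi; apply (meas_dynkin Sp X F Hiid N); auto.
  - intros i Hi. apply (prob_swap_coords Sp X F Hiid N _ _ i i0); auto; lia.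
  - intros i i' w Hi Hi' Hne; apply (Hdisj i i'); auto.
Qed.

End Exchangeable.

(* The counting argument is run for thresholds [x_j <= u], [x_k <= v] with [u <= v]; the
   option [None] stands for [+oo] and yields the probability that [j] and [k] are records. *)
Section RecordCounting.
Context {Omega : Type} (Sp : ProbSpace Omega) (X : nat -> Omega -> R) (F : R -> R).
Hypothesis Hiid : iid_with_cdf Sp X F.
Hypothesis HFc : continuity F.
Notation P := (prob Sp).
Notation ev := (event X).
Variables (j k : nat) (ou ov : option R).
Hypothesis Hj : (1 <= j)%nat.
Hypothesis Hjk : (j < k)%nat.
Hypothesis Hbelow : forall r, below ou r -> below ov r.

Definition records_below (x : nat -> R) : Prop :=
  strict_max_at x 1 j j /\ strict_max_at x 1 k k /\ below ou (x j) /\ below ov (x k).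
Definition head_max_at (i : nat) (x : nat -> R) : Prop :=
  strict_max_at x 1 j i /\ strict_max_at x 1 k k /\ below ou (x i) /\ below ov (x k).
Definition max_at_head_below (i : nat) (x : nat -> R) : Prop :=
  strict_max_at x 1 k i /\ all_below ou 1 j x /\ below ov (x i).
Definition max_at_below (i : nat) (x : nat -> R) : Prop := strict_max_at x 1 k i /\ below ou (x i).
Definition head_tail_below (x : nat -> R) : Prop := all_below ou 1 j x /\ all_below ov (S j) k x.

Ltac dynkin_unfold :=
  unfold records_below, head_max_at, max_at_head_below, max_at_below, head_tail_below;
  dynkin_auto.

Lemma prob_max_at_head_below_k : P (ev (max_at_head_below k)) = INR j * P (ev records_below).
Proof.
  rewrite (prob_eq_on_distinct Sp X F Hiid HFc k _
             (fun x => exists i, (1 <= i <= j)%nat /\ head_max_at i x));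
    [| dynkin_unfold | apply dynkin_exists_range; intros; dynkin_unfold |].
  - rewrite (prob_exists_exchangeable Sp X F Hiid k head_max_at 1 j j); try lia.
    + replace (S j - 1)%nat with j by lia. reflexivity.
    + intros; dynkin_unfold.
    + intros i x Hi. unfold head_max_at.
      rewrite strict_max_at_swap, strict_max_at_swap_other by lia.
      unfold swap_coords. rewrite swap_index_r, (swap_index_other i j k) by lia. tauto.
    + intros i i' x Hi Hi' Hne [H _] [H' _]. apply Hne, (strict_max_at_unique x 1 j); auto.
  - intros x Hx. unfold max_at_head_below, head_max_at. split.
    + intros [Hk [Hhead Hv]]. destruct (exists_strict_max_at k x 1 j Hx) as [i [Hi Hmax]]; try lia.
      exists i. split; [auto|split; [|split; [|split]]]; auto.
    + intros [i [Hi [Hmax [Hk [Hu Hv]]]]]. split; [|split]; auto.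
      apply (strict_max_at_all_below _ _ _ _ i); auto.
Qed.

Lemma max_at_below_swap i x : (1 <= i <= k)%nat ->
  max_at_below i x <-> max_at_below 1 (swap_coords i 1 x).
Proof.
  intros Hi. unfold max_at_below. rewrite strict_max_at_swap by lia.
  unfold swap_coords. rewrite swap_index_r. tauto.
Qed.

Lemma max_at_below_disjoint i i' x : (1 <= i <= k)%nat -> (1 <= i' <= k)%nat -> i <> i' ->
  max_at_below i x -> max_at_below i' x -> False.
Proof. intros Hi Hi' Hne [H _] [H' _]. apply Hne, (strict_max_at_unique x 1 k); auto. Qed.

Lemma prob_max_at_below_head :
  P (ev (fun x => exists i, (1 <= i <= j)%nat /\ max_at_below i x)) = INR j * P (ev (max_at_below 1)).
Proof.
  rewrite (prob_exists_exchangeable Sp X F Hiid k max_at_below 1 j 1); try lia.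
  - replace (S j - 1)%nat with j by lia. reflexivity.
  - intros; dynkin_unfold.
  - intros i x Hi; apply max_at_below_swap; lia.
  - intros i i' x Hi Hi'; apply max_at_below_disjoint; lia.
Qed.

Lemma prob_all_below : P (ev (all_below ou 1 k)) = INR k * P (ev (max_at_below 1)).
Proof.
  rewrite (prob_eq_on_distinct Sp X F Hiid HFc k _
             (fun x => exists i, (1 <= i <= k)%nat /\ max_at_below i x));
    [| dynkin_auto | apply dynkin_exists_range; intros; dynkin_unfold |].
  - rewrite (prob_exists_exchangeable Sp X F Hiid k max_at_below 1 k 1); try lia.
    + replace (S k - 1)%nat with k by lia. reflexivity.
    + intros; dynkin_unfold.
    + intros i x Hi; apply max_at_below_swap; lia.
    + intros i i' x Hi Hi'; apply max_at_below_disjoint; lia.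
  - intros x Hx. unfold max_at_below. split.
    + intros Hall. destruct (exists_strict_max_at k x 1 k Hx) as [i [Hi Hmax]]; try lia.
      exists i; auto.
    + intros [i [Hi [Hmax Hu]]]. apply (strict_max_at_all_below _ _ _ _ i); auto.
Qed.

Lemma prob_max_at_head_below :
  P (ev (fun x => exists i, (S j <= i <= k)%nat /\ max_at_head_below i x))
  = INR (k - j) * P (ev (max_at_head_below k)).
Proof.
  rewrite (prob_exists_exchangeable Sp X F Hiid k max_at_head_below (S j) k k); try lia.
  - reflexivity.
  - intros; dynkin_unfold.
  - intros i x Hi. unfold max_at_head_below.
    rewrite strict_max_at_swap, all_below_swap_outside by lia.
    unfold swap_coords. rewrite swap_index_r. tauto.
  - intros i i' x Hi Hi' Hne [H _] [H' _]. apply Hne, (strict_max_at_unique x 1 k); auto; lia.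
Qed.

(* Split [head_tail_below] according to where the overall maximum sits. *)
Lemma prob_head_tail_below :
  P (ev head_tail_below)
  = P (ev (fun x => exists i, (S j <= i <= k)%nat /\ max_at_head_below i x))
    + P (ev (fun x => exists i, (1 <= i <= j)%nat /\ max_at_below i x)).
Proof.
  set (tail x := exists i, (S j <= i <= k)%nat /\ max_at_head_below i x).
  set (head x := exists i, (1 <= i <= j)%nat /\ max_at_below i x).
  assert (Htail : dynkin k tail) by (apply dynkin_exists_range; intros; dynkin_unfold).
  assert (Hhead : dynkin k head) by (apply dynkin_exists_range; intros; dynkin_unfold).
  rewrite (prob_eq_on_distinct Sp X F Hiid HFc k _ (fun x => tail x \/ head x));
    [| dynkin_unfold | apply dynkin_or; auto |].
  - apply (prob_disjoint_or (ev tail) (ev head)); try apply (meas_dynkin Sp X F Hiid k); auto.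
    intros w [i [Hi [H _]]] [i' [Hi' [H' _]]].
    assert (i = i') by (apply (strict_max_at_unique (fun i => X i w) 1 k); auto; lia). lia.
  - intros x Hx. unfold head_tail_below, tail, head, max_at_head_below, max_at_below. split.
    + intros [Hhd Htl]. destruct (exists_strict_max_at k x 1 k Hx) as [i [Hi Hmax]]; try lia.
      destruct (Compare_dec.le_dec i j).
      * right. exists i. split; [lia|]. split; auto. apply Hhd; lia.
      * left. exists i. split; [lia|]. split; [|split]; auto. apply Htl; lia.
    + intros [[i [Hi [Hmax [Hhd Hv]]]]|[i [Hi [Hmax Hu]]]]; split; auto.
      * intros l Hl. apply (below_trans _ _ _ Hv).
        destruct (Nat.eq_dec l i) as [->|]; [lra|]. left; apply Hmax; auto; lia.
      * intros l Hl. apply (below_trans _ _ _ Hu).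
        destruct (Nat.eq_dec l i) as [->|]; [lra|]. left; apply Hmax; auto; lia.
      * intros l Hl. apply Hbelow, (below_trans _ _ _ Hu). left; apply Hmax; lia.
Qed.

Lemma record_counting_identity :
  INR j * INR (k - j) * P (ev records_below)
  = P (ev head_tail_below) - INR j / INR k * P (ev (all_below ou 1 k)).
Proof.
  rewrite prob_head_tail_below, prob_max_at_head_below, prob_max_at_head_below_k,
    prob_max_at_below_head, prob_all_below.
  assert (0 < INR k) by (apply lt_0_INR; lia). field. lra.
Qed.

End RecordCounting.

(** * Conditional probability of two records *)

Definition records_cdf (p q : R) (j k : nat) : R :=
  (INR k * p ^ j * q ^ (k - j) - INR j * p ^ k) / INR (k - j).

Section RecordProbabilities.
Context {Omega : Type} (Sp : ProbSpace Omega) (X : nat -> Omega -> R) (F : R -> R).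
Hypothesis Hiid : iid_with_cdf Sp X F.
Hypothesis HFc : continuity F.
Notation P := (prob Sp).
Notation ev := (event X).

Lemma is_record_strict_max_at m w : is_record X m w <-> strict_max_at (fun i => X i w) 1 m m.
Proof.
  unfold is_record, strict_max_at. split.
  - intros H l Hl Hlm. apply H; lia.
  - intros H i Hi. apply H; lia.
Qed.

Lemma records_below_event j k ou ov :
  ev (records_below j k ou ov)
  = fun w => (below ou (X j w) /\ below ov (X k w)) /\ (is_record X j w /\ is_record X k w).
Proof. apply pred_ext; intro w. unfold event, records_below. rewrite !is_record_strict_max_at. tauto. Qed.

Lemma prob_records j k : (1 <= j)%nat -> (j < k)%nat ->
  P (fun w => is_record X j w /\ is_record X k w) = 1 / (INR j * INR k).
Proof.
  intros Hj Hjk.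
  pose proof (record_counting_identity Sp X F Hiid HFc j k None None Hj Hjk (fun r H => H)) as H.
  rewrite records_below_event in H.
  rewrite (prob_ext (ev (head_tail_below j k None None)) (fun _ => True)),
    (prob_ext (ev (all_below None 1 k)) (fun _ => True)), prob_full in H
    by (unfold event, head_tail_below, all_below; simpl; tauto).
  rewrite (prob_ext _ (fun w => is_record X j w /\ is_record X k w)) in H by (simpl; tauto).
  assert (0 < INR j) by (apply lt_0_INR; lia). assert (0 < INR k) by (apply lt_0_INR; lia).
  assert (0 < INR (k - j)) by (apply lt_0_INR; lia).
  rewrite minus_INR in * by lia.
  apply Rmult_eq_reg_l with (INR j * (INR k - INR j)); [|nra].
  rewrite H. field. split; lra.
Qed.

Lemma prob_all_below_some u k : P (ev (all_below (Some u) 1 k)) = F u ^ k.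
Proof.
  rewrite <- prod1n_const, <- (prob_rect Sp X F Hiid k (fun _ => u)).
  apply prob_ext; intro w; unfold event, all_below, below, rect; tauto.
Qed.

Lemma prob_head_tail_below_some j k u v : (j <= k)%nat ->
  P (ev (head_tail_below j k (Some u) (Some v))) = F u ^ j * F v ^ (k - j).
Proof.
  intros Hjk. rewrite <- prod1n_split by lia.
  rewrite (prod1n_ext _ (fun i => F (if Nat.leb i j then u else v)))
    by (intros; destruct (Nat.leb i j); auto).
  rewrite <- (prob_rect Sp X F Hiid k (fun i => if Nat.leb i j then u else v)).
  apply prob_ext; intro w; unfold event, head_tail_below, all_below, below, rect; split.
  - intros [H1 H2] i Hi. destruct (Nat.leb_spec i j); [apply H1|apply H2]; lia.
  - intros H; split; intros i Hi; specialize (H i ltac:(lia));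
      destruct (Nat.leb_spec i j); auto; lia.
Qed.

Lemma cond_prob_records_le j k u v : (1 <= j)%nat -> (j < k)%nat -> u <= v ->
  cond_prob Sp (fun w => X j w <= u /\ X k w <= v) (fun w => is_record X j w /\ is_record X k w)
  = records_cdf (F u) (F v) j k.
Proof.
  intros Hj Hjk Huv. unfold cond_prob, records_cdf. rewrite prob_records by auto.
  pose proof (record_counting_identity Sp X F Hiid HFc j k (Some u) (Some v) Hj Hjk
                (fun r H => Rle_trans _ _ _ H Huv)) as H.
  rewrite prob_head_tail_below_some, prob_all_below_some, records_below_event in H by lia.
  simpl in H.
  assert (0 < INR j) by (apply lt_0_INR; lia). assert (0 < INR k) by (apply lt_0_INR; lia).
  assert (0 < INR (k - j)) by (apply lt_0_INR; lia).
  set (p := P (fun w => (X j w <= u /\ X k w <= v) /\ is_record X j w /\ is_record X k w)) in *.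
  replace p with ((F u ^ j * F v ^ (k - j) - INR j / INR k * F u ^ k) / (INR j * INR (k - j)))
    by (rewrite <- H; field; lra).
  field; lra.
Qed.

Lemma records_cdf_diag p j k : (j < k)%nat -> records_cdf p p j k = p ^ k.
Proof.
  intros Hjk. unfold records_cdf.
  replace (p ^ k) with (p ^ j * p ^ (k - j)) by (rewrite <- pow_add; f_equal; lia).
  rewrite minus_INR by lia. field.
  assert (INR j < INR k) by (apply lt_INR; lia). lra.
Qed.

(* For [v <= u] the constraint [X_j <= u] is implied by [X_j < X_k <= v]. *)
Lemma cond_prob_records j k u v : (1 <= j)%nat -> (j < k)%nat ->
  cond_prob Sp (fun w => X j w <= u /\ X k w <= v) (fun w => is_record X j w /\ is_record X k w)
  = if Rlt_dec u v then records_cdf (F u) (F v) j k else F v ^ k.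
Proof.
  intros Hj Hjk. destruct (Rlt_dec u v) as [Huv|Hvu].
  - apply cond_prob_records_le; auto; lra.
  - rewrite <- (records_cdf_diag (F v) j k), <- (cond_prob_records_le j k v v) by (auto; lra).
    unfold cond_prob; f_equal; apply prob_ext; intro w.
    split; intros [[H1 H2] [H3 H4]]; assert (X j w < X k w) by (apply H4; lia);
      repeat split; auto; lra.
Qed.

End RecordProbabilities.

(** * Limits *)

Lemma Un_cv_eventually (u v : nat -> R) l N :
  (forall n, (n >= N)%nat -> u n = v n) -> Un_cv u l -> Un_cv v l.
Proof.
  intros H Hu eps He. destruct (Hu eps He) as [N1 HN1]. exists (Nat.max N N1). intros n Hn.
  rewrite <- H by lia. apply HN1; lia.
Qed.

Lemma Un_cv_inv (u : nat -> R) l : l <> 0 -> Un_cv u l -> Un_cv (fun n => / u n) (/ l).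
Proof.
  intros Hl Hu.
  exact (continuity_seq (/ id)%F u l
           (continuity_pt_inv id l (derivable_continuous_pt _ _ (derivable_pt_id l)) Hl) Hu).
Qed.

Lemma ratio_eventually_ge1 (m : nat -> nat) c :
  Un_cv (fun n => INR (m n) / INR n) c -> 0 < c -> exists N, forall n, (n >= N)%nat -> (1 <= m n)%nat.
Proof.
  intros Hm Hc. destruct (Hm c Hc) as [N HN]. exists N; intros n Hn.
  specialize (HN n Hn). unfold R_dist in HN. apply Rabs_def2 in HN.
  destruct (m n); [|lia]. unfold Rdiv in HN; simpl in HN. lra.
Qed.

Lemma pow_le_exp (p : R) a b : 0 <= p <= 1 -> (a <= b)%nat -> p ^ b <= p ^ a.
Proof.
  intros Hp Hab. replace b with (a + (b - a))%nat by lia. rewrite pow_add.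
  assert (0 <= p ^ a) by (apply pow_le; lra).
  assert (p ^ (b - a) <= 1) by (rewrite <- (pow1 (b - a)); apply pow_incr; lra).
  pose proof (pow_le p (b - a) (proj1 Hp)). nra.
Qed.

Lemma rpow_plus x a b : rpow x a * rpow x b = rpow x (a + b).
Proof. unfold rpow. destruct (Rle_dec x 0); [ring|]. rewrite Rpower_plus. ring. Qed.

Section PowerRatioLimit.
Variables (p : nat -> R) (m : nat -> nat) (g c : R).
Hypothesis Hp : forall n, 0 <= p n <= 1.
Hypothesis Hg : Un_cv (fun n => p n ^ n) g.
Hypothesis Hm : Un_cv (fun n => INR (m n) / INR n) c.
Hypothesis Hc : 0 < c.

(* [p^m = exp ((m/n) ln (p^n))] once [p^n] stays away from [0]. *)
Lemma pow_ratio_limit_pos : 0 < g -> Un_cv (fun n => p n ^ m n) (exp (c * ln g)).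
Proof.
  intros Hgp. destruct (Hg (g / 2) ltac:(lra)) as [N0 HN0].
  apply (Un_cv_eventually (fun n => exp ((INR (m n) / INR n) * ln (p n ^ n))) _ _ (Nat.max N0 1)).
  - intros n Hn. specialize (HN0 n ltac:(lia)). unfold R_dist in HN0. apply Rabs_def2 in HN0.
    assert (Hpn : 0 < p n).
    { destruct (Hp n) as [[H|H] _]; auto. rewrite <- H, pow_i in HN0; [lra|lia]. }
    assert (0 < INR n) by (apply lt_0_INR; lia).
    rewrite ln_pow, <- (Rpower_pow (m n) (p n)) by auto. unfold Rpower. f_equal. field. lra.
  - apply (continuity_seq exp); [apply derivable_continuous_pt, derivable_pt_exp|].
    apply CV_mult; auto. apply (continuity_seq ln); auto.
    apply derivable_continuous_pt. exists (/ g). apply derivable_pt_lim_ln; auto.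
Qed.

(* Eventually [n <= K m]; if [p^m >= eps] then [p^n >= p^(K m) >= eps^K]. *)
Lemma pow_ratio_limit_zero : g = 0 -> Un_cv (fun n => p n ^ m n) 0.
Proof.
  intros Hg0 eps He. subst g.
  destruct (nat_above (2 / c)) as [K HK].
  assert (HKc : 2 <= INR K * c).
  { apply (Rmult_lt_compat_r c) in HK; auto. unfold Rdiv in HK.
    rewrite Rmult_assoc, Rinv_l in HK; lra. }
  destruct (Hm (c / 2) ltac:(lra)) as [N1 HN1].
  destruct (Hg (eps ^ K) (pow_lt _ _ He)) as [N2 HN2].
  exists (Nat.max 1 (Nat.max N1 N2)). intros n Hn.
  specialize (HN1 n ltac:(lia)). specialize (HN2 n ltac:(lia)).
  unfold R_dist in *. rewrite Rminus_0_r in *.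
  rewrite Rabs_right in * by (apply Rle_ge, pow_le; apply Hp).
  apply Rabs_def2 in HN1.
  assert (Hn0 : 0 < INR n) by (apply lt_0_INR; lia).
  assert (HmK : (n <= K * m n)%nat).
  { apply INR_le. rewrite mult_INR.
    assert (c / 2 * INR n < INR (m n)).
    { apply Rmult_lt_reg_r with (/ INR n); [apply Rinv_0_lt_compat; auto|].
      rewrite Rmult_assoc, Rinv_r, Rmult_1_r by lra. unfold Rdiv in HN1. lra. }
    pose proof (pos_INR (m n)). nra. }
  destruct (Rlt_dec (p n ^ m n) eps) as [|Hge]; auto. exfalso.
  assert (eps ^ K <= (p n ^ m n) ^ K) by (apply pow_incr; lra).
  rewrite <- pow_mult, Nat.mul_comm in H.
  pose proof (pow_le_exp (p n) n (K * m n) (Hp n) HmK). lra.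
Qed.

Lemma pow_ratio_limit : Un_cv (fun n => p n ^ m n) (rpow g c).
Proof.
  assert (Hg0 : 0 <= g).
  { apply (Rle_cv_lim (Un := fun _ => 0) (Vn := fun n => p n ^ n)); auto.
    - intros n; apply pow_le, Hp.
    - intros eps He; exists O; intros; unfold R_dist; rewrite Rminus_diag, Rabs_R0; auto. }
  unfold rpow. destruct (Rle_dec g 0).
  - apply pow_ratio_limit_zero; lra.
  - apply pow_ratio_limit_pos; lra.
Qed.

End PowerRatioLimit.

Lemma records_cdf_limit (p q : nat -> R) (j k : nat -> nat) g1 g2 l1 l2 :
  (forall n, 0 <= p n <= 1) -> (forall n, 0 <= q n <= 1) ->
  Un_cv (fun n => p n ^ n) g1 -> Un_cv (fun n => q n ^ n) g2 ->
  (forall n, (j n < k n)%nat) ->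
  Un_cv (fun n => INR (j n) / INR n) l1 -> 0 < l1 ->
  Un_cv (fun n => INR (k n) / INR n) l2 -> l1 < l2 ->
  Un_cv (fun n => records_cdf (p n) (q n) (j n) (k n))
    (rpow g1 l1 * (l2 / (l2 - l1) * rpow g2 (l2 - l1) - l1 / (l2 - l1) * rpow g1 (l2 - l1))).
Proof.
  intros Hp Hq Hg1 Hg2 Hjk Hj Hl1 Hk Hl12.
  assert (Hkj : Un_cv (fun n => INR (k n - j n) / INR n) (l2 - l1)).
  { apply (Un_cv_eventually (fun n => INR (k n) / INR n - INR (j n) / INR n) _ _ O).
    - intros n _. rewrite minus_INR by (specialize (Hjk n); lia). unfold Rdiv; ring.
    - apply CV_minus; auto. }
  replace (rpow g1 l1 * (l2 / (l2 - l1) * rpow g2 (l2 - l1) - l1 / (l2 - l1) * rpow g1 (l2 - l1)))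
    with (l2 * / (l2 - l1) * rpow g1 l1 * rpow g2 (l2 - l1) - l1 * / (l2 - l1) * rpow g1 l2)
    by (replace (rpow g1 l2) with (rpow g1 l1 * rpow g1 (l2 - l1))
          by (rewrite rpow_plus; f_equal; ring); unfold Rdiv; ring).
  apply (Un_cv_eventually (fun n =>
      INR (k n) / INR n * / (INR (k n - j n) / INR n) * p n ^ j n * q n ^ (k n - j n)
      - INR (j n) / INR n * / (INR (k n - j n) / INR n) * p n ^ k n) _ _ 1).
  - intros n Hn. unfold records_cdf.
    assert (0 < INR n) by (apply lt_0_INR; lia).
    assert (0 < INR (k n - j n)) by (apply lt_0_INR; specialize (Hjk n); lia).
    field; lra.
  - apply CV_minus; repeat apply CV_mult; auto;
      try (apply Un_cv_inv; auto; lra); apply pow_ratio_limit; auto; lra.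
Qed.

Lemma normalized_le_iff x a b y : 0 < a -> ((x - b) / a <= y <-> x <= a * y + b).
Proof.
  intros Ha. unfold Rdiv. split; intros H.
  - apply (Rmult_le_compat_l a) in H; [|lra].
    replace (a * ((x - b) * / a)) with (x - b) in H by (field; lra). lra.
  - apply (Rmult_le_reg_l a); auto. replace (a * ((x - b) * / a)) with (x - b) by (field; lra). lra.
Qed.

Lemma cond_prob_records_normalized {Omega} (S : ProbSpace Omega) X F j k a b y1 y2 :
  iid_with_cdf S X F -> continuity F -> 0 < a -> (1 <= j)%nat -> (j < k)%nat ->
  cond_prob S (fun w => (X j w - b) / a <= y1 /\ (X k w - b) / a <= y2)
              (fun w => is_record X j w /\ is_record X k w)
  = if Rlt_dec y1 y2 then records_cdf (F (a * y1 + b)) (F (a * y2 + b)) j k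
    else F (a * y2 + b) ^ k.
Proof.
  intros Hiid HFc Ha Hj Hjk.
  unfold cond_prob.
  rewrite (prob_ext (fun w => ((X j w - b) / a <= y1 /\ (X k w - b) / a <= y2) /\ _)
                    (fun w => (X j w <= a * y1 + b /\ X k w <= a * y2 + b) /\
                              (is_record X j w /\ is_record X k w)))
    by (intro w; rewrite !normalized_le_iff by auto; tauto).
  fold (cond_prob S (fun w => X j w <= a * y1 + b /\ X k w <= a * y2 + b)
                    (fun w => is_record X j w /\ is_record X k w)).
  rewrite (cond_prob_records S X F Hiid HFc) by auto.
  destruct (Rlt_dec (a * y1 + b) (a * y2 + b)); destruct (Rlt_dec y1 y2); auto; exfalso; nra.
Qed.

Theorem corollary10 (Omega : Type) (S : ProbSpace Omega) (X : nat -> Omega -> R)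
  (F G : R -> R) (a b : nat -> R) (j k : nat -> nat) (l1 l2 : R) :
  iid_with_cdf S X F ->
  continuity F ->
  distribution_function G -> non_degenerate G -> continuity G ->
  in_domain_of_attraction F G a b ->
  (forall n, (j n < k n)%nat) ->
  Un_cv (fun n => INR (j n) / INR n) l1 -> 0 < l1 ->
  Un_cv (fun n => INR (k n) / INR n) l2 -> l1 < l2 ->
  forall y1 y2 : R,
    Un_cv (fun n =>
      cond_prob S
        (fun w => (X (j n) w - b n) / a n <= y1 /\ (X (k n) w - b n) / a n <= y2)
        (fun w => is_record X (j n) w /\ is_record X (k n) w))
      (G_lim G l1 l2 y1 y2).
Proof.
  intros Hiid HFc _ _ _ [Ha Hdom] Hjk Hj Hl1 Hk Hl12 y1 y2.
  destruct (ratio_eventually_ge1 j l1 Hj Hl1) as [N HN].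
  assert (HF : forall s, 0 <= F s <= 1) by apply (cdf_range S X F Hiid).
  apply (Un_cv_eventually (fun n =>
           if Rlt_dec y1 y2 then records_cdf (F (a n * y1 + b n)) (F (a n * y2 + b n)) (j n) (k n)
           else F (a n * y2 + b n) ^ k n) _ _ N).
  { intros n Hn. symmetry. apply cond_prob_records_normalized; auto. }
  unfold G_lim; cbv zeta. destruct (Rlt_dec y1 y2).
  - apply records_cdf_limit; auto.
  - apply pow_ratio_limit; auto; lra.
Qed.
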